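(* For every $m\in\mathbb{N}$, the matrix $C_m=\frac12\mathrm{I}_m+\mathrm{U}_m$ is congruent to $\Gamma_2\oplus\mathrm{H}_2(-1)^{\oplus (m-2)/2}$ if $m$ is even, and to $1\oplus\mathrm{H}_2(-1)^{\oplus(m-1)/2}$ if $m$ is odd.
   Context: $\mathrm{I}_m$ is the identity and $\mathrm{U}_m\in\mathbb{R}^{m\times m}$ the strictly upper triangular matrix with all entries above the diagonal equal to $1$ ($C_m$ is the level-2 signature of the canonical axis path in $\mathbb{R}^m$). $\Gamma_2=\begin{bmatrix}0&-1\\1&1\end{bmatrix}$, $\mathrm{H}_2(-1)=\begin{bmatrix}0&1\\-1&0\end{bmatrix}$. $M\oplus W$ denotes the block diagonal matrix, $M^{\oplus n}$ the $n$-fold block diagonal sum. $M,V\in\mathbb{R}^{m\times m}$ are congruent if $PMP^\top=V$ for some invertible real $P$. *)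

From HB Require Import structures.
From mathcomp Require Import all_boot all_order all_algebra.
From mathcomp Require Import reals.
Set Implicit Arguments. Unset Strict Implicit. Unset Printing Implicit Defensive.
Import Order.TTheory GRing.Theory Num.Theory.
Local Open Scope ring_scope.

Section Defs.
Variable R : realType.

Definition Um (m : nat) : 'M[R]_m := \matrix_(i < m, j < m) ((i < j)%N)%:R.

Definition Cm (m : nat) : 'M[R]_m := 2^-1 *: 1%:M + Um m.

Definition Gamma2 : 'M[R]_2 :=
  \matrix_(i < 2, j < 2)
    (if (i == 0 :> nat) then (if (j == 0 :> nat) then 0 else -1)
     else 1).

Definition H2m1 : 'M[R]_2 :=
  \matrix_(i < 2, j < 2)
    (if (i == 0 :> nat) then (if (j == 0 :> nat) then 0 else 1)
     else (if (j == 0 :> nat) then -1 else 0)).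

Definition dsum (m n : nat) (M : 'M[R]_m) (W : 'M[R]_n) : 'M[R]_(m + n) :=
  block_mx M 0 0 W.

Fixpoint Hsum (k : nat) : 'M[R]_(k.*2) :=
  match k return 'M[R]_(k.*2) with
  | 0 => 0
  | k'.+1 => dsum H2m1 (Hsum k')
  end.

Definition congruent (n : nat) (M V : 'M[R]_n) : Prop :=
  exists P : 'M[R]_n, P \in unitmx /\ P *m M *m P^T = V.

End Defs.

From HB Require Import structures.
From mathcomp Require Import all_boot all_order all_algebra.
From mathcomp Require Import reals.
From mathcomp Require Import zify ring.
Set Implicit Arguments. Unset Strict Implicit. Unset Printing Implicit Defensive.
Import Order.TTheory GRing.Theory Num.Theory.
Local Open Scope ring_scope.

(* Let e_0, ..., e_(m-1) be the standard basis and N the upper shift matrix.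
   In the basis e_i - e_(i+1) (with e_m = 0), which inverts the upper
   triangular all-ones matrix, the form 2 C_m has Gram matrix
   W_m = N - N^T + E_(m-1,m-1).  In the basis p_(2i) = e_0 + e_2 + ... + e_(2i),
   p_(2i+1) = e_(2i+1), the matrix W_m splits into k copies of H_2(-1) followed
   by the block 1 (m = 2k+1) or [[0,1],[-1,1]] (m = 2k+2); listing the last one
   or two vectors first, with p_(2k+1) negated, gives 1 (+) H_2(-1)^k and
   Gamma_2 (+) H_2(-1)^k.  Since each e_i is a combination of at most two of
   the new basis vectors (e_(2i) = p_(2i) - p_(2i-2)), all Gram matrices are
   computed entrywise by a case analysis on the indices. *)

Definition natmx (R : Type) (n : nat) (f : nat -> nat -> R) : 'M[R]_n :=
  \matrix_(i < n, j < n) f i j.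

Section SparseRows.
Variable R : pzRingType.
Implicit Types (f g : nat -> nat -> R) (a b : nat -> R) (p q : nat -> nat).

Lemma natmxP n f g :
  (forall i j, (i < n)%N -> (j < n)%N -> f i j = g i j) -> natmx n f = natmx n g.
Proof. by move=> fg; apply/matrixP => i j; rewrite !mxE fg. Qed.

Lemma natmx1 n : 1%:M = natmx n (fun i j => (i == j)%:R : R).
Proof. by apply/matrixP => i j; rewrite !mxE. Qed.

Definition sparse2mx n a p b q : 'M[R]_n :=
  \matrix_(i < n, k < n) (a i * (k == p i :> nat)%:R + b i * (k == q i :> nat)%:R).

Lemma sum_if_eq2 n (p q : nat) (F G : nat -> R) : (p < n)%N -> (q < n)%N ->
  \sum_(k < n) ((if k == p :> nat then F k else 0) + (if k == q :> nat then G k else 0))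
  = F p + G q.
Proof.
by move=> ltpn ltqn; rewrite big_split -!big_mkcond !big_ord1_eq ltpn ltqn.
Qed.

Section Sparse2.
Variables (n : nat) (a b : nat -> R) (p q : nat -> nat).
Hypotheses (p_lt : forall i, (i < n)%N -> (p i < n)%N)
           (q_lt : forall i, (i < n)%N -> (q i < n)%N).
Let P := sparse2mx n a p b q.

Lemma mul_sparse2mx_natmx f (i j : 'I_n) :
  (P *m natmx n f) i j = a i * f (p i) j + b i * f (q i) j.
Proof.
rewrite mxE; under eq_bigr => k _ do
  rewrite !mxE mulrDl -!mulrA !mulr_natl !mulrnAr !mulrb.
exact: (sum_if_eq2 (fun k => a i * f k j) (fun k => b i * f k j)
  (p_lt (ltn_ord i)) (q_lt (ltn_ord i))).
Qed.

Lemma mul_natmx_tr_sparse2mx f (i j : 'I_n) :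
  (natmx n f *m P^T) i j = f i (p j) * a j + f i (q j) * b j.
Proof.
rewrite mxE; under eq_bigr => k _ do
  rewrite !mxE mulrDr !mulrA !mulr_natr !mulrb.
exact: (sum_if_eq2 (fun k => f i k * a j) (fun k => f i k * b j)
  (p_lt (ltn_ord j)) (q_lt (ltn_ord j))).
Qed.

End Sparse2.
End SparseRows.

Section Congruence.
Variable R : realType.
Implicit Types (n : nat).

Lemma congruent_trans n (A B C : 'M[R]_n) :
  congruent A B -> congruent B C -> congruent A C.
Proof.
move=> [P [Pu <-]] [Q [Qu <-]]; exists (Q *m P); split.
  by rewrite unitmx_mul Pu Qu.
by rewrite trmx_mul !mulmxA.
Qed.

Lemma congruent_sym n (A B : 'M[R]_n) : congruent A B -> congruent B A.
Proof.
move=> [P [Pu <-]]; exists (invmx P); split; first by rewrite unitmx_inv.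
by rewrite trmx_inv !mulmxA mulVmx // mul1mx -mulmxA mulmxV ?mulmx1 ?unitmx_tr.
Qed.

Lemma congruent_scale n (c : R) (A : 'M[R]_n) : 0 < c -> congruent A (c *: A).
Proof.
move=> c_gt0; exists (Num.sqrt c)%:M; split.
  by rewrite -scalemx1 unitmxZ ?unitmx1 // unitfE sqrtr_eq0 -ltNge.
rewrite tr_scalar_mx mul_scalar_mx mul_mx_scalar scalerA.
by rewrite -expr2 sqr_sqrtr ?ltW.
Qed.

Lemma congruent_sparse2 n a p b q (inv f g h : nat -> nat -> R) :
  (forall i, (i < n)%N -> (p i < n)%N) -> (forall i, (i < n)%N -> (q i < n)%N) ->
  (forall i l, (i < n)%N -> (l < n)%N ->
     a i * inv (p i) l + b i * inv (q i) l = (i == l)%:R) ->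
  (forall i l, (i < n)%N -> (l < n)%N -> a i * f (p i) l + b i * f (q i) l = h i l) ->
  (forall i j, (i < n)%N -> (j < n)%N -> h i (p j) * a j + h i (q j) * b j = g i j) ->
  congruent (natmx n f) (natmx n g).
Proof.
move=> p_lt q_lt inv_ok fh hg; exists (sparse2mx n a p b q); split.
  suff /mulmx1_unit[] : sparse2mx n a p b q *m natmx n inv = 1%:M by [].
  by rewrite natmx1; apply/matrixP => i l; rewrite mul_sparse2mx_natmx // mxE inv_ok.
have -> : sparse2mx n a p b q *m natmx n f = natmx n h.
  by apply/matrixP => i l; rewrite mul_sparse2mx_natmx // mxE fh.
by apply/matrixP => i j; rewrite mul_natmx_tr_sparse2mx // mxE hg.
Qed.

End Congruence.

Ltac index_test_split :=
  let atomic c := lazymatch c with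
    | context [if _ then _ else _] => fail
    | true => fail | false => fail | _ => idtac end in
  match goal with
  | |- context [if ?c then _ else _] => atomic c; case: (boolP c) => ?
  | |- context [(?x == ?y :> nat)] =>
      atomic (x == y :> nat); case: (boolP (x == y :> nat)) => ?
  | |- context [(?x <= ?y)%N] => atomic (x <= y)%N; case: (boolP (x <= y)%N) => ?
  | |- context [odd ?x] => case: (boolP (odd x)) => ?
  end; rewrite /=.

Ltac by_index_cases := repeat (index_test_split; try (exfalso; lia)); ring.

Section NormalForms.
Variable R : realType.
Implicit Types (f g : nat -> nat -> R).

Definition dsum_fun p f g (i j : nat) : R :=
  if (i < p)%N then (if (j < p)%N then f i j else 0)
  else (if (j < p)%N then 0 else g (i - p)%N (j - p)%N).

Lemma dsum_natmx p q f g :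
  dsum (natmx p f) (natmx q g) = natmx (p + q) (dsum_fun p f g).
Proof.
apply/matrixP => i j; rewrite /dsum /natmx /dsum_fun !mxE.
case: splitP => i' ->; rewrite mxE; case: splitP => j' Hj; by rewrite !mxE ?Hj ?addKn.
Qed.

Definition h2_fun (i j : nat) : R := ((i == 0) && (j == 1))%:R - ((i == 1) && (j == 0))%:R.
Definition gamma2_fun (i j : nat) : R :=
  ((i == 1) && (j <= 1)%N)%:R - ((i == 0) && (j == 1))%:R.
Definition hsum_fun (i j : nat) : R :=
  (~~ odd i && (j == i.+1))%:R - (odd i && (i == j.+1))%:R.

Lemma H2m1_natmx : H2m1 R = natmx 2 h2_fun.
Proof. by apply/matrixP => -[[|[|//]] ?] [[|[|//]] ?]; rewrite !mxE /h2_fun /= ?subr0 ?sub0r. Qed.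

Lemma Gamma2_natmx : Gamma2 R = natmx 2 gamma2_fun.
Proof. by apply/matrixP => -[[|[|//]] ?] [[|[|//]] ?]; rewrite !mxE /gamma2_fun /= ?subr0 ?sub0r. Qed.

Lemma Hsum_natmx k : Hsum R k = natmx k.*2 hsum_fun.
Proof.
elim: k => [|k IH]; first by apply/matrixP => -[].
rewrite /= IH H2m1_natmx dsum_natmx; apply: natmxP => i j _ _.
rewrite /dsum_fun /h2_fun /hsum_fun; by_index_cases.
Qed.

Definition skew_corner m (i j : nat) : R :=
  (j == i.+1)%:R - (i == j.+1)%:R + ((i.+1 == m) && (j.+1 == m))%:R.

Lemma scale2_Cm m : 2 *: Cm R m = natmx m (fun i j => (i == j)%:R + 2 * (i < j)%:R).
Proof.
apply/matrixP => i j; rewrite !mxE mulrDr mulrA mulfV ?pnatr_eq0 // mul1r.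
exact: erefl.
Qed.

Lemma Cm_congruent_skew_corner m : congruent (Cm R m) (natmx m (skew_corner m)).
Proof.
apply: congruent_trans (congruent_scale _ (ltr0Sn _ 1)) _; rewrite scale2_Cm.
apply: (@congruent_sparse2 _ m (fun _ => 1) id (fun i => - (i.+1 < m)%:R)
  (fun i => if (i.+1 < m)%N then i.+1 else i) (fun i j => (i <= j)%:R) _ _
  (fun i l => (i == l)%:R + (l == i.+1)%:R)) => i.
- done.
- by case: ifP.
- move=> l ? ?; by_index_cases.
- move=> l ? ?; by_index_cases.
- move=> j ? ?; rewrite /skew_corner; by_index_cases.
Qed.

(* Row i writes e_i in the basis t = (p_(2k), p_0, ..., p_(2k-1)), inv lists
   the t_j in the basis e, and h i l is the pairing of e_i with t_l. *)
Lemma congruent_skew_corner_odd k :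
  congruent (natmx k.*2.+1 (dsum_fun 1 (fun i j => (i == j)%:R) hsum_fun))
            (natmx k.*2.+1 (skew_corner k.*2.+1)).
Proof.
apply: (@congruent_sparse2 _ k.*2.+1 (fun _ => 1)
  (fun i => if i.+1 == k.*2.+1 then 0 else i.+1)
  (fun i => - (~~ odd i && (1 < i)%N)%:R) predn
  (fun j l => (if j == 0 then ~~ odd l else if odd j then ~~ odd l && (l < j)%N
               else l == j.-1)%:R) _ _
  (fun i l => (~~ odd i && (l == i.+2))%:R - ((l == i) && (0 < i)%N)%:R
              + ((i.+1 == k.*2.+1) && (l == 0))%:R)) => i.
- move=> ?; case: eqP; lia.
- lia.
- move=> l ? ?; by_index_cases.
- move=> l ? ?; rewrite /dsum_fun /hsum_fun; by_index_cases.
- move=> j ? ?; rewrite /skew_corner; by_index_cases.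
Qed.

(* As above, with t = (p_(2k), -p_(2k+1), p_0, ..., p_(2k-1)). *)
Lemma congruent_skew_corner_even k :
  congruent (natmx k.*2.+2 (dsum_fun 2 gamma2_fun hsum_fun))
            (natmx k.*2.+2 (skew_corner k.*2.+2)).
Proof.
apply: (@congruent_sparse2 _ k.*2.+2 (fun i => if i.+1 == k.*2.+2 then -1 else 1)
  (fun i => if i.+2 == k.*2.+2 then 0 else if i.+1 == k.*2.+2 then 1 else i.+2)
  (fun i => - (~~ odd i && (1 < i)%N)%:R) id
  (fun j l => if j == 0 then (~~ odd l)%:R else if j == 1 then - (l == k.*2.+1)%:R
              else if odd j then (l == (j - 2)%N)%:R else (~~ odd l && (l < j)%N)%:R) _ _
  (fun i l => (~~ odd i && (l == i.+3))%:R - ((l == i.+1) && (0 < i)%N)%:R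
              - ((i.+2 == k.*2.+2) && (l == 1))%:R - ((i.+1 == k.*2.+2) && (l <= 1)%N)%:R))
  => i.
- by move=> ?; repeat case: eqP => ?; lia.
- done.
- move=> l ? ?; by_index_cases.
- move=> l ? ?; rewrite /dsum_fun /gamma2_fun /hsum_fun; by_index_cases.
- move=> j ? ?; rewrite /skew_corner; by_index_cases.
Qed.

End NormalForms.

Theorem lemma7p6 (R : realType) :
  (forall k : nat, congruent (Cm R k.*2.+2) (dsum (Gamma2 R) (Hsum R k))) /\
  (forall k : nat, congruent (Cm R k.*2.+1) (dsum (1%:M : 'M[R]_1) (Hsum R k))).
Proof.
split=> k; apply: congruent_trans (Cm_congruent_skew_corner _ _) _;
  apply: congruent_sym.
- rewrite Gamma2_natmx Hsum_natmx dsum_natmx.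
  exact: congruent_skew_corner_even.
- rewrite natmx1 Hsum_natmx dsum_natmx.
  exact: congruent_skew_corner_odd.
Qed.
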